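(* Let $G=(V,E)$ be a graph with at least one edge, clique number $\omega$ and clique distance $\sigma$. Let $\mathcal{C}^*$ be a clique cover of $G$ minimizing $\|\mathcal{C}^*\|$ among all clique covers of $G$, and let $\mathcal{C}$ be any family produced by the $\sigma$-succinct construction on $G$. Then $$\|\mathcal{C}\|\le \min\{\omega-1,\ 2\sigma-1\}\cdot\|\mathcal{C}^*\|.$$
   Context: All graphs are finite, simple, undirected, with no isolated vertices; $n=|V|$, $m=|E|$; $N(v)$ open neighbourhood, $N[v]=N(v)\cup\{v\}$. A clique is a vertex set inducing a complete subgraph; $\omega$ is the maximum clique size. Clique distance $\sigma:=\binom{n}{2}-m+1$. $\|\mathcal{F}\|:=\sum_{F\in\mathcal{F}}|F|$. A clique cover of $G$ is an indexed family of cliques of $G$ such that every edge lies in at least one member. First-fit greedy coloring of the complement: fix an ordering $v_1,\dots,v_n$ of $V$; process the vertices in this order and give $v_i$ the smallest positive integer $k$ such that every previously processed vertex of colour $k$ is adjacent to $v_i$ in $G$. Let $F_1,\dots,F_p$ be the colour classes. For $v\in F_k$ let $T_v:=\{\ell<k: F_\ell\cap N(v)\neq\emptyset\}$. The $\sigma$-succinct construction maintains a family $\mathcal{C}$; an edge is uncovered if it is not contained in any current member of $\mathcal{C}$. To extend a member $C$ means: while there is an uncovered edge $\{x,y\}$ with $C\subseteq N[x]\cap N[y]$, replace $C$ (inside $\mathcal{C}$) by $C\cup\{x,y\}$. Step 1: $\mathcal{C}:=\{F_\ell:|F_\ell|\ge2\}$; in an arbitrary fixed order extend each member. Step 2: in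 an arbitrary fixed order of the pairs $(v,\ell)$ with $\ell\in T_v$, let $U:=\{u\in F_\ell\cap N(v):\{u,v\}\text{ uncovered}\}$; if $U\ne\emptyset$, add $C_{v,\ell}:=U\cup\{v\}$ to $\mathcal{C}$ and extend it. The output is the final $\mathcal{C}$ (any choices allowed). *)

From mathcomp Require Import all_boot.
Set Implicit Arguments. Unset Strict Implicit. Unset Printing Implicit Defensive.

Section Graph.
Variables (T : finType) (e : rel T).

Definition simple_graph := symmetric e /\ irreflexive e.
Definition no_isolated := forall x : T, exists y, e x y.

Definition nbh (x : T) : {set T} := [set y | e x y].
Definition cnbh (x : T) : {set T} := x |: nbh x.

Definition is_clique (A : {set T}) : Prop :=
  forall x y, x \in A -> y \in A -> x != y -> e x y.

Definition n_edges : nat := #|[set A : {set T} | (#|A| == 2) && [forall x in A, forall y in A, (x != y) ==> e x y]]|.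
Definition clique_number : nat :=
  \max_(A : {set T} | [forall x in A, forall y in A, (x != y) ==> e x y]) #|A|.
Definition clique_distance : nat := 'C(#|T|, 2) - n_edges + 1.

Definition fam_size (F : seq {set T}) : nat := \sum_(C <- F) #|C|.

Definition is_clique_cover (F : seq {set T}) : Prop :=
  (forall C, C \in F -> is_clique C) /\
  (forall x y, e x y -> exists2 C, C \in F & (x \in C) && (y \in C)).

(* First-fit greedy colouring of the complement w.r.t. the ordering s *)
Definition first_fit (s : seq T) (col : T -> nat) : Prop :=
  uniq s /\ (forall x, x \in s) /\
  forall v, [/\ 1 <= col v,
    (forall w, index w s < index v s -> col w = col v -> e v w) &
    (forall k, 1 <= k < col v ->
       exists w, [/\ index w s < index v s, col w = k & ~~ e v w])].

Definition colour_class (col : T -> nat) (k : nat) : {set T} := [set x | col x == k].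

Definition Tset (col : T -> nat) (v : T) (l : nat) : Prop :=
  l < col v /\ exists u, (u \in colour_class col l) && e v u.

Definition uncovered (F : seq {set T}) (x y : T) : Prop :=
  forall C, C \in F -> ~~ ((x \in C) && (y \in C)).

Definition U_set (col : T -> nat) (l : nat) (v : T) (F : seq {set T}) : {set T} :=
  [set u in colour_class col l | e u v & all (fun C : {set T} => ~~ ((u \in C) && (v \in C))) F].

Inductive extends (i : nat) : seq {set T} -> seq {set T} -> Prop :=
| ext_stop F :
    (forall x y, e x y -> uncovered F x y ->
       ~ (nth set0 F i \subset cnbh x :&: cnbh y)) ->
    extends i F F
| ext_step F x y F' :
    e x y -> uncovered F x y ->
    nth set0 F i \subset cnbh x :&: cnbh y ->
    extends i (set_nth set0 F i (nth set0 F i :|: [set x; y])) F' ->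
    extends i F F'.

Inductive extend_seq : seq nat -> seq {set T} -> seq {set T} -> Prop :=
| exs_nil F : extend_seq [::] F F
| exs_cons i js F F1 F' :
    extends i F F1 -> extend_seq js F1 F' -> extend_seq (i :: js) F F'.

Inductive step2 (col : T -> nat) : seq (T * nat) -> seq {set T} -> seq {set T} -> Prop :=
| st2_nil F : step2 col [::] F F
| st2_skip v l ps F F' :
    U_set col l v F = set0 ->
    step2 col ps F F' -> step2 col ((v, l) :: ps) F F'
| st2_add v l ps F F1 F' :
    U_set col l v F != set0 ->
    extends (size F) (rcons F (v |: U_set col l v F)) F1 ->
    step2 col ps F1 F' -> step2 col ((v, l) :: ps) F F'.

Definition sigma_succinct (F : seq {set T}) : Prop :=
  exists (s : seq T) (col : T -> nat), first_fit s col /\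
  let p := \max_(x : T) col x in
  let F0 := [seq colour_class col l | l <- iota 1 p & 2 <= #|colour_class col l|] in
  exists (ord : seq nat) (F1 : seq {set T}) (ps : seq (T * nat)),
    [/\ perm_eq ord (iota 0 (size F0)),
        extend_seq ord F0 F1,
        uniq ps,
        (forall v l, (v, l) \in ps <-> Tset col v l) &
        step2 col ps F1 F].

End Graph.

From mathcomp Require Import all_boot.
From mathcomp Require Import zify.
Set Implicit Arguments. Unset Strict Implicit. Unset Printing Implicit Defensive.

(* Both bounds compare the output with an arbitrary clique cover C.
   omega - 1: throughout the construction every vertex v lies in at most as
   many members as it has neighbours u with uv already covered (a vertex lies
   in at most one colour class, and whenever an extension or a Step-2 member
   raises the count at v it also newly covers an edge at v).  Hence ||F|| is
   at most sum_v deg v, and deg v <= sum over the members K of C through v of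
   (|K| - 1) <= omega - 1.
   2 sigma - 1: a pair (v, l) with l < col v yields the non-edge {v, w}, w an
   earlier vertex of colour l not adjacent to v, and distinct pairs yield
   distinct non-edges.  So the number of colours and the number of Step-2
   pairs are both bounded by the number sigma - 1 of non-edges, and each
   member has at most n <= ||C|| vertices. *)

Lemma count_set_nth (X : Type) (a : pred X) x0 (s : seq X) i y : i < size s ->
  count a (set_nth x0 s i y) + a (nth x0 s i) = count a s + a y.
Proof.
elim: s i => [|z s IH] [|i] //= hi; first lia.
rewrite -addnA IH //; lia.
Qed.

Section Families.
Variable T : finType.
Implicit Types (F : seq {set T}) (x y v : T).

Definition fam_deg F v : nat := count (fun C : {set T} => v \in C) F.

Definition covers F x y : bool := has (fun C : {set T} => (x \in C) && (y \in C)) F.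

Definition fam_sub F F' : Prop :=
  size F <= size F' /\ forall i, nth set0 F i \subset nth set0 F' i.

Lemma fam_size_sum_deg F : fam_size F = \sum_v fam_deg F v.
Proof.
elim: F => [|C F IH]; first by rewrite /fam_size big_nil big1.
rewrite /fam_size big_cons -/(fam_size F) IH big_split /=; congr (_ + _).
by rewrite -sum1_card big_mkcond; apply: eq_bigr => x _; case: (x \in C).
Qed.

Lemma fam_size_le F : fam_size F <= size F * #|T|.
Proof.
elim: F => [|C F IH]; first by rewrite /fam_size big_nil.
by rewrite /fam_size big_cons mulSn leq_add ?max_card.
Qed.

Lemma card_le_sum_cover (S : {set T}) (r : seq {set T}) :
  (forall u, u \in S -> exists2 K, K \in r & u \in K) -> #|S| <= \sum_(K <- r) #|K|.
Proof.
elim: r S => [|K r IH] S cov.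
  rewrite big_nil leqn0 cards_eq0; apply/eqP/setP => u; rewrite inE.
  by apply/negP => /cov [].
rewrite big_cons -(cardsID K S) leq_add ?subset_leq_card ?subsetIr //.
apply: IH => u; rewrite inE => /andP [uK /cov [K']].
by rewrite inE => /predU1P [-> uK'|K'r uK']; [rewrite uK' in uK | exists K'].
Qed.

Lemma coversC F x y : covers F x y = covers F y x.
Proof. by apply: eq_has => C; rewrite andbC. Qed.

Lemma uncoveredP F x y : uncovered F x y <-> ~~ covers F x y.
Proof.
split => [unc | /hasPn unc C /unc //]; apply/hasP => -[C /unc].
by move=> /negP.
Qed.

Lemma covers_sub F F' x y : fam_sub F F' -> covers F x y -> covers F' x y.
Proof.
move=> [sz sub] /(has_nthP set0) [i iF /andP [xC yC]].
apply/(has_nthP set0); exists i; first exact: leq_trans iF sz.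
by rewrite !(subsetP (sub i)).
Qed.

Lemma fam_sub_set_nth F i (X : {set T}) :
  fam_sub F (set_nth set0 F i (nth set0 F i :|: X)).
Proof.
split=> [|j]; first by rewrite size_set_nth leq_maxr.
by rewrite nth_set_nth /=; case: eqP => [->|_]; rewrite ?subsetUl.
Qed.

Lemma fam_sub_rcons F C : fam_sub F (rcons F C).
Proof.
split=> [|j]; first by rewrite size_rcons.
rewrite nth_rcons; case: ifP => // hj.
by rewrite nth_default ?sub0set // leqNgt hj.
Qed.

Lemma covers_set_nth F i (X : {set T}) x y : i < size F -> x \in X -> y \in X ->
  covers (set_nth set0 F i (nth set0 F i :|: X)) x y.
Proof.
move=> iF xX yX; apply/(has_nthP set0); exists i.
  by rewrite size_set_nth (leq_trans iF) ?leq_maxr.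
by rewrite nth_set_nth /= eqxx !in_setU xX yX !orbT.
Qed.

Lemma covers_rcons F (C : {set T}) x y : x \in C -> y \in C -> covers (rcons F C) x y.
Proof. by move=> xC yC; apply/hasP; exists C; rewrite ?mem_rcons ?mem_head ?xC. Qed.

End Families.

Section Graph.
Variables (T : finType) (e : rel T).
Hypotheses (e_sym : symmetric e) (e_irr : irreflexive e).
Implicit Types (F : seq {set T}) (x y v : T).

Definition covered_nbh F v : {set T} := [set u | e v u & covers F u v].

Definition succinct_inv F : Prop := forall v, fam_deg F v <= #|covered_nbh F v|.

Lemma covered_nbh_sub F F' v : fam_sub F F' -> covered_nbh F v \subset covered_nbh F' v.
Proof.
move=> sub; apply/subsetP => u; rewrite !inE => /andP [-> /=].
exact: covers_sub.
Qed.

Lemma succinct_inv_grow (X : {set T}) F F' :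
  fam_sub F F' ->
  (forall z, fam_deg F' z <= fam_deg F z + (z \in X)) ->
  (forall z, z \in X -> exists2 u, e z u & ~~ covers F u z && covers F' u z) ->
  succinct_inv F -> succinct_inv F'.
Proof.
move=> sub deg new inv z; apply: leq_trans (deg z) _.
have le := subset_leq_card (covered_nbh_sub z sub).
case zX: (z \in X); last by rewrite addn0 (leq_trans (inv z)).
have [u zu /andP [nFu F'u]] := new z zX.
have : covered_nbh F z \proper covered_nbh F' z.
  apply/properP; split; first exact: covered_nbh_sub.
  exists u; first by rewrite !inE zu F'u.
  by rewrite !inE (negbTE nFu) andbF.
by move/proper_card; rewrite addn1; apply: leq_ltn_trans (inv z).
Qed.

Lemma succinct_inv_set_nth F i x y :
  i < size F -> e x y -> uncovered F x y -> succinct_inv F ->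
  succinct_inv (set_nth set0 F i (nth set0 F i :|: [set x; y])).
Proof.
move=> iF xy /uncoveredP nxy.
apply: (succinct_inv_grow (X := [set x; y])); first exact: fam_sub_set_nth.
  move=> z; have := count_set_nth (fun C : {set T} => z \in C) set0
                      (nth set0 F i :|: [set x; y]) iF.
  rewrite /fam_deg /= in_setU.
  by case: (z \in nth set0 F i); case: (z \in [set x; y]) => /=; lia.
move=> z; rewrite !inE => /orP [] /eqP ->.
  by exists y; rewrite // coversC nxy covers_set_nth ?set21 ?set22.
exists x; first by rewrite e_sym.
by rewrite nxy covers_set_nth ?set21 ?set22.
Qed.

Lemma succinct_inv_rcons F v (U : {set T}) :
  U != set0 -> (forall u, u \in U -> e u v && ~~ covers F u v) ->
  succinct_inv F -> succinct_inv (rcons F (v |: U)).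
Proof.
move=> /set0Pn [u0 u0U] hU.
apply: (succinct_inv_grow (X := v |: U)); first exact: fam_sub_rcons.
  by move=> z; rewrite /fam_deg -cats1 count_cat /= addn0.
move=> z; rewrite in_setU1 => /predU1P [-> | zU].
  have /andP [u0v nu0] := hU u0 u0U; exists u0; first by rewrite e_sym.
  by rewrite nu0 covers_rcons // !inE ?eqxx ?u0U ?orbT.
have /andP [zv nz] := hU z zU; exists v => //.
by rewrite coversC nz covers_rcons // !inE ?eqxx ?zU ?orbT.
Qed.

Lemma extends_inv i F F' : extends e i F F' -> i < size F -> succinct_inv F ->
  succinct_inv F' /\ size F' = size F.
Proof.
elim=> [//| {}F x y F1 xy unc _ _ IH] iF inv.
have sz : size (set_nth set0 F i (nth set0 F i :|: [set x; y])) = size F.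
  by rewrite size_set_nth; apply/maxn_idPr.
rewrite -sz; apply: IH; rewrite ?sz //; exact: succinct_inv_set_nth.
Qed.

Lemma extend_seq_inv ord F F' : extend_seq e ord F F' ->
  {subset ord <= gtn (size F)} -> succinct_inv F ->
  succinct_inv F' /\ size F' = size F.
Proof.
elim=> [//| i js {}F F1 F2 ext _ IH] ordF inv.
have [inv1 sz1] := extends_inv ext (ordF i (mem_head _ _)) inv.
rewrite -sz1; apply: IH inv1 => j jjs; rewrite sz1; apply: ordF.
by rewrite inE jjs orbT.
Qed.

Lemma step2_inv col ps F F' : step2 e col ps F F' -> succinct_inv F ->
  succinct_inv F' /\ size F' <= size F + size ps.
Proof.
elim=> [{}F | v l {}ps {}F F1 _ _ IH | v l {}ps {}F F1 F2 U0 ext _ IH] inv.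
- by rewrite addn0.
- by have [inv1 sz1] := IH inv; split; rewrite //= addnS leqW.
have inv1 : succinct_inv (rcons F (v |: U_set e col l v F)).
  apply: succinct_inv_rcons => // u; rewrite inE => /and3P [_ -> /allP unc].
  exact/hasPn.
have lt : size F < size (rcons F (v |: U_set e col l v F)) by rewrite size_rcons.
have [inv2 sz2] := extends_inv ext lt inv1.
have [inv3 sz3] := IH inv2; split => //.
by move: sz3; rewrite sz2 size_rcons /=; lia.
Qed.

Lemma first_fit_class_clique s col z w :
  first_fit e s col -> z != w -> col w = col z -> e z w.
Proof.
move=> [_ [s_all ff]] zw cwz.
have : index w s != index z s.
  apply: contra zw => /eqP izw; apply/eqP.
  by rewrite -(nth_index z (s_all z)) -izw nth_index.
case: (ltngtP (index w s) (index z s)) => [lt _|lt _|//].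
  by have [_ adj _] := ff z; apply: adj.
by have [_ adj _] := ff w; rewrite e_sym; apply: adj.
Qed.

Lemma succinct_inv_classes s col p : first_fit e s col ->
  succinct_inv [seq colour_class col l | l <- iota 1 p & 2 <= #|colour_class col l|].
Proof.
move=> ff z; set F0 := [seq _ | l <- _ & _].
have deg1 : fam_deg F0 z <= 1.
  rewrite /fam_deg count_map (eq_count (a2 := pred1 (col z))); last first.
    by move=> l /=; rewrite inE eq_sym.
  by rewrite count_uniq_mem ?leq_b1 // filter_uniq // iota_uniq.
case: (posnP (fam_deg F0 z)) => [->//|]; rewrite /fam_deg -has_count => /hasP [C CF0 zC].
apply: leq_trans deg1 _; rewrite card_gt0; apply/set0Pn.
have /mapP [l /[!mem_filter] /andP [C2 _] Cl] := CF0.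
have : 0 < #|C :\ z| by move: C2; rewrite (cardsD1 z) -Cl zC add1n ltnS.
rewrite card_gt0 => /set0Pn [w /[!inE] /andP [wz wC]].
have zw : e z w.
  apply: (first_fit_class_clique ff); first by rewrite eq_sym.
  by move: wC zC; rewrite Cl !inE => /eqP -> /eqP ->.
by exists w; rewrite inE zw; apply/hasP; exists C; rewrite ?wC.
Qed.

Definition non_edges : {set {set T}} :=
  [set A : {set T} | (#|A| == 2) && ~~ [forall x in A, forall y in A, (x != y) ==> e x y]].

Lemma clique_distance_non_edges : clique_distance e = #|non_edges| + 1.
Proof.
rewrite /clique_distance /n_edges -card_draws.
pose K := [set A : {set T} | [forall x in A, forall y in A, (x != y) ==> e x y]].
rewrite -(cardsID K [set A : {set T} | #|A| == 2]).
have -> : #|[set A : {set T} | #|A| == 2] :&: K| = #|[set A : {set T} | (#|A| == 2) &&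
           [forall x in A, forall y in A, (x != y) ==> e x y]]|.
  by apply: eq_card => A; rewrite !inE.
have -> : #|[set A : {set T} | #|A| == 2] :\: K| = #|non_edges|.
  by apply: eq_card => A; rewrite !inE andbC.
lia.
Qed.

Lemma non_edges_mem v w : v != w -> ~~ e v w -> [set v; w] \in non_edges.
Proof.
move=> vw; rewrite inE cards2 vw /=; apply: contra.
move=> /forallP /(_ v) /implyP /(_ (set21 _ _)) /forallP /(_ w) /implyP.
by move=> /(_ (set22 _ _)) /implyP /(_ vw).
Qed.

Definition ff_witness s (col : T -> nat) v l : T :=
  odflt v [pick w | (index w s < index v s) && (col w == l) && ~~ e v w].

Lemma ff_witnessP s col v l : first_fit e s col -> 1 <= l < col v ->
  [/\ index (ff_witness s col v l) s < index v s, col (ff_witness s col v l) = l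
    & ~~ e v (ff_witness s col v l)].
Proof.
move=> [_ [_ ff]] lv; rewrite /ff_witness.
case: pickP => [w /andP [/andP [? /eqP ?] ?] //| none].
have [_ _ /(_ l lv) [w [iw cw nvw]]] := ff v.
by move: (none w); rewrite iw cw eqxx nvw.
Qed.

(* The non-edge {v, w} determines (v, l): v is its later vertex and l = col w. *)
Lemma first_fit_pairs_le s col (qs : seq (T * nat)) : first_fit e s col -> uniq qs ->
  (forall q, q \in qs -> 1 <= q.2 < col q.1) -> size qs <= #|non_edges|.
Proof.
move=> ff uqs qs_col.
pose f (q : T * nat) := [set q.1; ff_witness s col q.1 q.2].
have f_inj : {in qs &, injective f}.
  move=> [v l] [v' l'] /qs_col vl /qs_col v'l'.
  have [] := ff_witnessP ff vl; have [] := ff_witnessP ff v'l'; rewrite /f /=.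
  move: (ff_witness s col v l) (ff_witness s col v' l') => w w' iw' cw' _ iw cw _ fvv'.
  have v_in : v \in [set v'; w'] by rewrite -fvv' set21.
  have w_in : w \in [set v'; w'] by rewrite -fvv' set22.
  have v'_in : v' \in [set v; w] by rewrite fvv' set21.
  rewrite !inE in v_in w_in v'_in.
  case/predU1P: v_in => [vv' | /eqP vw'].
    case/predU1P: w_in => [wv' | /eqP ww']; first by rewrite wv' -vv' ltnn in iw.
    by rewrite vv' -cw -cw' ww'.
  case/predU1P: v'_in => [v'v | /eqP v'w]; first by rewrite v'v vw' ltnn in iw'.
  rewrite vw' in iw; rewrite v'w in iw'.
  by have := ltn_trans iw iw'; rewrite ltnn.
rewrite cardE -(size_map f); apply: uniq_leq_size; first by rewrite map_inj_in_uniq.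
move=> _ /mapP [[v l] vl ->]; rewrite mem_enum.
have [iw _ nvw] := ff_witnessP ff (qs_col _ vl).
by apply: non_edges_mem nvw; apply: contraTneq iw => <-; rewrite ltnn.
Qed.

Lemma first_fit_colour_le s col v : first_fit e s col -> col v <= #|non_edges| + 1.
Proof.
move=> ff; suff : col v - 1 <= #|non_edges| by lia.
have := @first_fit_pairs_le s col [seq (v, l) | l <- iota 1 (col v - 1)] ff.
rewrite size_map size_iota; apply; first by rewrite map_inj_uniq ?iota_uniq // => a b [].
by move=> _ /mapP [l /[!mem_iota] lv ->] /=; lia.
Qed.

Lemma sigma_succinct_inv F : sigma_succinct e F ->
  succinct_inv F /\ size F <= 2 * clique_distance e - 1.
Proof.
move=> [s [col [ff /= [ord [F1 [ps [ord_perm ext ups ps_T st]]]]]]].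
set p := \max_(x : T) col x in ord_perm ext.
set F0 := [seq _ | l <- _ & _] in ord_perm ext.
have [inv1 sz1] : succinct_inv F1 /\ size F1 = size F0.
  apply: (extend_seq_inv ext _ (succinct_inv_classes _ ff)) => i.
  by rewrite (perm_mem ord_perm) mem_iota add0n => /andP [].
have [inv sz] := step2_inv st inv1; split => //.
have F0_le : size F0 <= p.
  by rewrite /F0 size_map size_filter (leq_trans (count_size _ _)) ?size_iota.
have p_le : p <= #|non_edges| + 1.
  by rewrite /p; apply/bigmax_leqP => v _; apply: first_fit_colour_le ff.
have ps_le : size ps <= #|non_edges|.
  apply: (first_fit_pairs_le ff ups) => -[v l] /ps_T [lv [u /andP [ul _]]] /=.
  rewrite lv andbT; move: ul; rewrite inE => /eqP <-.
  by case: ff => _ [_ /(_ u) []].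
by rewrite clique_distance_non_edges; lia.
Qed.

Lemma is_clique_card_le K : is_clique e K -> #|K| <= clique_number e.
Proof.
move=> cl; rewrite /clique_number; apply: (leq_bigmax_cond (F := fun A : {set T} => #|A|)).
apply/forallP => a; apply/implyP => aK; apply/forallP => b; apply/implyP => bK.
by apply/implyP; apply: cl.
Qed.

Lemma sum_card_nbh_le_cover C : is_clique_cover e C ->
  \sum_v #|nbh e v| <= (clique_number e - 1) * fam_size C.
Proof.
move=> [C_cl C_cov]; rewrite fam_size_sum_deg big_distrr; apply: leq_sum => v _.
have cover_v u : u \in nbh e v ->
    exists2 K : {set T}, K \in [seq K :\ v | K : {set T} <- C & v \in K] & u \in K.
  rewrite inE => vu; have [K KC /andP [vK uK]] := C_cov v u vu.
  exists (K :\ v); first by apply/mapP; exists K; rewrite ?mem_filter ?vK.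
  by rewrite !inE uK andbT; apply: contraTneq vu => ->; rewrite e_irr.
apply: leq_trans (card_le_sum_cover cover_v) _.
rewrite big_map big_filter /fam_deg -sum1_count big_distrr /=.
rewrite big_seq_cond [X in _ <= X]big_seq_cond; apply: leq_sum => K /andP [KC vK].
by have := is_clique_card_le (C_cl K KC); rewrite (cardsD1 v) vK add1n muln1; lia.
Qed.

Lemma succinct_inv_fam_size F : succinct_inv F -> fam_size F <= \sum_v #|nbh e v|.
Proof.
move=> inv; rewrite fam_size_sum_deg; apply: leq_sum => v _.
apply: leq_trans (inv v) (subset_leq_card _); apply/subsetP => u.
by rewrite !inE => /andP [].
Qed.

Lemma card_le_fam_size_cover C : no_isolated e -> is_clique_cover e C -> #|T| <= fam_size C.
Proof.
move=> noiso [_ C_cov]; rewrite fam_size_sum_deg -sum1_card; apply: leq_sum => x _.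
have [y xy] := noiso x; have [K KC /andP [xK _]] := C_cov x y xy.
by rewrite /fam_deg -has_count; apply/hasP; exists K.
Qed.

End Graph.

Theorem mainTheorem6 (T : finType) (e : rel T) :
  simple_graph e -> no_isolated e -> (exists x y, e x y) ->
  forall Cstar : seq {set T},
    is_clique_cover e Cstar ->
    (forall C' : seq {set T}, is_clique_cover e C' -> fam_size Cstar <= fam_size C') ->
  forall F : seq {set T}, sigma_succinct e F ->
    fam_size F <= minn (clique_number e - 1) (2 * clique_distance e - 1) * fam_size Cstar.
Proof.
move=> [e_sym e_irr] noiso _ Cstar Ccover _ F /(sigma_succinct_inv e_sym) [inv sizeF].
rewrite minnMl leq_min; apply/andP; split.
  exact: leq_trans (succinct_inv_fam_size inv) (sum_card_nbh_le_cover e_irr Ccover).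
exact: leq_trans (fam_size_le F) (leq_mul sizeF (card_le_fam_size_cover noiso Ccover)).
Qed.
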